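(* Let $m\ge n$ and let $C_1,\dots,C_m\subseteq\mathbb{S}$ be nonempty s-convex sets. If $\bigcap_{j\in J}C_j\neq\emptyset$ for every $J\subseteq\{1,\dots,m\}$ with $\operatorname{card}J=n$, and $\bigcup_{j\in J}C_j\neq\mathbb{S}$ for every $J\subseteq\{1,\dots,m\}$ with $\operatorname{card}J=n+1$, then $\bigcap_{i=1}^mC_i\neq\emptyset$.
   Context: Standing setting: $n\ge 2$; $o$ denotes the zero vector of $\mathbb{R}^n$. $\Phi:\mathbb{R}^n\to\mathbb{R}_+:=[0,\infty)$ is a continuous function with $\Phi(tx)=t\Phi(x)$ for all $x\in\mathbb{R}^n$, $t\ge 0$, and $\Phi(x)=0$ iff $x=o$. Set $\mathbb{S}:=\{x\in\mathbb{R}^n\mid \Phi(x)=1\}$ and $\rho:\mathbb{R}^n\to\{o\}\cup\mathbb{S}$, $\rho(x):=x/\Phi(x)$ for $x\neq o$, $\rho(o):=o$. For $x,y\in\mathbb{S}$, $\lambda\in[0,1]$, $\lambda x+_s(1-\lambda)y:=\rho(\lambda x+(1-\lambda)y)$. A nonempty set $S\subseteq\mathbb{S}$ is called s-convex if $\lambda x+_s(1-\lambda)y\in S$ for all $x,y\in S$ and $\lambda\in[0,1]$. *)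

From HB Require Import structures.
From mathcomp Require Import all_boot all_order all_algebra.
From mathcomp Require Import all_classical all_reals all_analysis.
Set Implicit Arguments. Unset Strict Implicit. Unset Printing Implicit Defensive.
Import Order.TTheory GRing.Theory Num.Theory numFieldNormedType.Exports.
Local Open Scope classical_set_scope.
Local Open Scope ring_scope.

Definition gsphere (R : realType) (n : nat) (Phi : 'rV[R]_n -> R) : set 'rV[R]_n :=
  [set x | Phi x = 1].

Definition grho (R : realType) (n : nat) (Phi : 'rV[R]_n -> R) (x : 'rV[R]_n)
  : 'rV[R]_n :=
  if x == 0 then 0 else (Phi x)^-1 *: x.

Definition scomb (R : realType) (n : nat) (Phi : 'rV[R]_n -> R) (lam : R)
  (x y : 'rV[R]_n) : 'rV[R]_n :=
  grho Phi (lam *: x + (1 - lam) *: y).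

Definition s_convex (R : realType) (n : nat) (Phi : 'rV[R]_n -> R)
  (S : set 'rV[R]_n) : Prop :=
  [/\ S !=set0, S `<=` gsphere Phi &
      forall x y lam, S x -> S y -> 0 <= lam -> lam <= 1 -> S (scomb Phi lam x y)].

(* Every s-convex set S spans a "cone" { y <> 0 | rho(y) \in S } which is
   closed under addition and positive scaling; so a nonnegative, nonzero
   combination of points of S lies in this cone and its radial projection lies
   in S.  The theorem is proved by induction on m.  For m + 1 sets, the induction
   hypothesis gives, for every index i, a point v_i lying in all C_j, j <> i.
   - If the v_i admit a linear relation sum b_i v_i = 0 whose coefficients
     are not all of one strict sign, a Radon-type splitting of the relation
     yields a common point (Lemma [radon_common_point]).
   - This always happens when m + 1 > n + 1 (a relation among n + 1 of the
     v_i, extended by a zero coefficient).  When m + 1 = n + 1 the remaining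
     case is a relation with strictly positive coefficients; then a point p of
     the sphere outside every C_j (the hypothesis on (n+1)-fold unions) is
     either a source of a relation of the previous kind, or is a nonnegative
     combination of the v_i avoiding some index kk, forcing p \in C_kk, which
     is absurd (Lemma [positive_relation_common_point]). *)
From HB Require Import structures.
From mathcomp Require Import all_boot all_order all_algebra.
From mathcomp Require Import all_classical all_reals all_analysis.
From mathcomp Require Import ring.
Import Order.TTheory GRing.Theory Num.Theory numFieldNormedType.Exports.
Set Implicit Arguments. Unset Strict Implicit. Unset Printing Implicit Defensive.
Local Open Scope classical_set_scope.
Local Open Scope ring_scope.

Lemma exists_linear_relation {R : fieldType} {n k : nat} (v : 'I_k -> 'rV[R]_n) :
  (n < k)%N -> exists b : 'I_k -> R, (exists i, b i != 0) /\ \sum_i b i *: v i = 0.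
Proof.
move=> hnk; pose W := \matrix_(i < k) v i.
have kerW_neq0 : kermx W != 0.
  rewrite -mxrank_eq0 mxrank_ker subn_eq0 -ltnNge.
  exact: leq_ltn_trans (rank_leq_col W) hnk.
have [i [j hij]] : exists i j, kermx W i j != 0.
  apply/not_existsP => h; move/eqP: kerW_neq0; apply; apply/matrixP => i j.
  rewrite [RHS]mxE; apply/eqP; apply: contra_notT (h i) => hij; by exists j.
exists (fun l => row i (kermx W) 0 l); split; first by exists j; rewrite mxE.
rewrite -[LHS](eq_bigr _ (fun l _ => congr1 (fun z => _ *: z) (rowK v l))).
by rewrite -mulmx_sum_row -row_mul mulmx_ker row0.
Qed.

(* If sum a_i v_i = 0 with all a_i > 0, any combination sum c_i v_i can be
   rewritten with nonnegative coefficients, one of which vanishes: subtract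
   the multiple t a of the relation, t = min_i c_i / a_i. *)
Lemma shift_to_boundary (R : realFieldType) (V : lmodType R) (I : finType)
    (i0 : I) (a c : I -> R) (v : I -> V) :
  (forall i, 0 < a i) -> \sum_i a i *: v i = 0 ->
  exists2 g : I -> R, (forall i, 0 <= g i) &
    exists kk, g kk = 0 /\ \sum_i g i *: v i = \sum_i c i *: v i.
Proof.
move=> a_gt0 rel_a.
case: (@arg_minP _ _ _ i0 xpredT (fun i => c i / a i) isT) => kk _ kk_min.
pose t := c kk / a kk.
exists (fun i => c i - t * a i) => [i|].
  by rewrite subr_ge0 -ler_pdivlMr //; exact: kk_min.
exists kk; split; first by rewrite /t divfK ?subrr // lt0r_neq0.
rewrite (eq_bigr (fun i => c i *: v i - t *: (a i *: v i))); last first.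
  by move=> i _; rewrite scalerBl scalerA.
by rewrite sumrB -scaler_sumr rel_a scaler0 subr0.
Qed.

Section SConvexCones.
Variables (R : realType) (n : nat) (Phi : 'rV[R]_n -> R).
Hypothesis Phi_ge0 : forall x, 0 <= Phi x.
Hypothesis PhiZ : forall x t, 0 <= t -> Phi (t *: x) = t * Phi x.
Hypothesis Phi_eq0 : forall x, Phi x = 0 <-> x = 0.

Lemma Phi_gt0 x : x != 0 -> 0 < Phi x.
Proof.
move=> hx; rewrite lt_def Phi_ge0 andbT; apply/eqP => /Phi_eq0 x0.
by rewrite x0 eqxx in hx.
Qed.

Lemma gsphere_neq0 x : gsphere Phi x -> x != 0.
Proof.
move=> hx; apply/eqP => x0; move: hx; rewrite /gsphere /= x0 (proj2 (Phi_eq0 0)) //.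
by move/eqP; rewrite eq_sym oner_eq0.
Qed.

Lemma grhoZ c y : 0 < c -> y != 0 -> grho Phi (c *: y) = grho Phi y.
Proof.
move=> hc hy; rewrite /grho scaler_eq0 (negbTE hy) (gt_eqF hc) /=.
rewrite PhiZ ?ltW // scalerA; congr (_ *: _).
have := Phi_gt0 hy => hp; field; apply/andP; split; exact: lt0r_neq0.
Qed.

Lemma grho_sphere x : gsphere Phi x -> grho Phi x = x.
Proof.
by move=> hx; rewrite /grho (negbTE (gsphere_neq0 hx)) [Phi x]hx invr1 scale1r.
Qed.

Lemma grhoK y : y != 0 -> y = Phi y *: grho Phi y.
Proof.
move=> hy; rewrite /grho (negbTE hy) scalerA divff ?scale1r //.
exact: lt0r_neq0 (Phi_gt0 hy).
Qed.

Lemma s_convex_neq0 S : s_convex Phi S -> ~ S 0.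
Proof. by case=> _ hsub _ /hsub /gsphere_neq0; rewrite eqxx. Qed.

Definition scone (S : set 'rV[R]_n) (y : 'rV[R]_n) : Prop := y != 0 /\ S (grho Phi y).

Lemma scone_scale S x c : s_convex Phi S -> S x -> 0 < c -> scone S (c *: x).
Proof.
move=> hS Sx hc; case: (hS) => _ hsub _.
have hx : x != 0 by apply/eqP => x0; apply: (s_convex_neq0 hS); rewrite -x0.
split; first by rewrite scaler_eq0 negb_or hx gt_eqF.
by rewrite grhoZ // grho_sphere //; exact: hsub.
Qed.

(* The cone of an s-convex set is closed under addition: y + z is a positive
   multiple of an s-combination of rho(y) and rho(z). *)
Lemma scone_add S y z : s_convex Phi S -> scone S y -> scone S z -> scone S (y + z).
Proof.
move=> hS [hy Sy] [hz Sz]; case: (hS) => _ _ s_comb.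
set a := Phi y; set b := Phi z.
have ha : 0 < a by exact: Phi_gt0.
have hb : 0 < b by exact: Phi_gt0.
have hab : 0 < a + b by rewrite addr_gt0.
set lam := a / (a + b).
set u := lam *: grho Phi y + (1 - lam) *: grho Phi z.
have yz_u : y + z = (a + b) *: u.
  rewrite /u scalerDr !scalerA.
  have -> : (a + b) * lam = a by rewrite /lam; field; exact: lt0r_neq0.
  have -> : (a + b) * (1 - lam) = b by rewrite /lam; field; exact: lt0r_neq0.
  by rewrite -grhoK // -grhoK.
have Su : S (grho Phi u).
  apply: (s_comb _ _ lam Sy Sz); first by rewrite /lam divr_ge0 // ltW.
  by rewrite /lam ler_pdivrMr // mul1r lerDl ltW.
have hu : u != 0.
  by apply/eqP => u0; move: Su; rewrite u0 /grho eqxx; exact: s_convex_neq0.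
split; rewrite yz_u; first by rewrite scaler_eq0 negb_or hu gt_eqF.
by rewrite grhoZ.
Qed.

Lemma scone_sum S (I : finType) (c : I -> R) (v : I -> 'rV[R]_n) :
  s_convex Phi S -> (forall i, 0 <= c i) -> (forall i, 0 < c i -> S (v i)) ->
  (exists i, 0 < c i) -> scone S (\sum_i c i *: v i).
Proof.
move=> hS c_ge0 Sv [i0 ci0_gt0].
have Sv0 := scone_scale hS (Sv _ ci0_gt0) ci0_gt0.
rewrite (bigD1 i0) //=.
have : (fun y => y = 0 \/ scone S y) (\sum_(i | i != i0) c i *: v i).
  apply: (big_ind (fun y => y = 0 \/ scone S y)) => [|y z [->|hy] [->|hz]|i _].
  - by left.
  - by left; rewrite addr0.
  - by right; rewrite add0r.
  - by right; rewrite addr0.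
  - by right; exact: scone_add.
  - have [->|ci_neq0] := eqVneq (c i) 0; first by left; rewrite scale0r.
    have ci_gt0 : 0 < c i by rewrite lt_def ci_neq0 c_ge0.
    by right; apply: scone_scale => //; exact: Sv.
by case=> [->|h]; [rewrite addr0 | exact: scone_add].
Qed.

Section OmitOnePoints.
Variables (I : finType) (C : I -> set 'rV[R]_n) (v : I -> 'rV[R]_n).
Hypothesis C_sconvex : forall i, s_convex Phi (C i).
Hypothesis v_omit : forall i j, i != j -> C j (v i).

Lemma scone_avoiding j (c : I -> R) :
  (forall i, 0 <= c i) -> c j = 0 -> (exists i, 0 < c i) ->
  scone (C j) (\sum_i c i *: v i).
Proof.
move=> c_ge0 cj0 c_pos; apply: scone_sum => // i ci_gt0; apply: v_omit.
by apply: contraTneq ci_gt0 => ->; rewrite cj0 ltxx.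
Qed.

(* Radon splitting of a relation with a positive and a nonpositive
   coefficient: w := sum_{b_i > 0} b_i v_i = sum_{b_i < 0} (-b_i) v_i, and
   rho(w) lies in every C j. *)
Lemma radon_pos (b : I -> R) :
  \sum_i b i *: v i = 0 -> (exists i, 0 < b i) -> (exists j, b j <= 0) ->
  exists x, forall j, C j x.
Proof.
move=> rel_b [i0 bi0_gt0] [j0 bj0_le0].
pose bp i := if 0 <= b i then b i else 0.
pose bm i := if 0 <= b i then 0 else - b i.
have bp_ge0 i : 0 <= bp i by rewrite /bp; case: ifP.
have bm_ge0 i : 0 <= bm i by rewrite /bm; case: (leP 0 (b i)) => // hb; rewrite oppr_ge0 ltW.
have b_split i : b i = bp i - bm i.
  by rewrite /bp /bm; case: ifP; rewrite ?subr0 ?sub0r ?opprK.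
have bp_eq_bm : \sum_i bp i *: v i = \sum_i bm i *: v i.
  apply/eqP; rewrite -subr_eq0 -sumrB -[X in _ == X]rel_b; apply/eqP.
  by apply: eq_bigr => i _; rewrite -scalerBl -b_split.
set w := \sum_i bp i *: v i.
have w_nonpos j : b j <= 0 -> scone (C j) w.
  move=> hj; apply: scone_avoiding => //.
    by rewrite /bp; case: (leP 0 (b j)) => // hb; apply/eqP; rewrite eq_le hj hb.
  by exists i0; rewrite /bp ltW.
have w_neq0 : w != 0 by case: (w_nonpos j0 bj0_le0).
have [i1 bi1_lt0] : exists i, b i < 0.
  apply/not_existsP => hn; move/eqP: w_neq0; apply; rewrite /w bp_eq_bm.
  apply: big1 => i _; rewrite /bm; case: ifPn => [_|]; first by rewrite scale0r.
  by rewrite -ltNge => /hn.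
have w_pos j : 0 < b j -> scone (C j) w.
  move=> hj; rewrite /w bp_eq_bm; apply: scone_avoiding => //.
    by rewrite /bm ltW.
  by exists i1; rewrite /bm leNgt bi1_lt0 /= oppr_gt0.
exists (grho Phi w) => j; case: (leP (b j) 0) => hj.
  by case: (w_nonpos j hj).
by case: (w_pos j hj).
Qed.

Lemma radon_common_point (b : I -> R) :
  \sum_i b i *: v i = 0 -> (exists i, b i != 0) -> (exists j, b j <= 0) ->
  (exists j, 0 <= b j) -> exists x, forall j, C j x.
Proof.
move=> rel_b [i0 bi0_neq0] b_nonpos b_nonneg.
have [b_pos|b_notpos] := pselect (exists i, 0 < b i); first exact: (radon_pos rel_b).
apply: (@radon_pos (fun i => - b i)).
- rewrite (eq_bigr (fun i => - (b i *: v i))); last by move=> i _; rewrite scaleNr.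
  by rewrite sumrN rel_b oppr0.
- exists i0; rewrite oppr_gt0 lt_neqAle bi0_neq0 /= leNgt.
  by apply/negP => h; apply: b_notpos; exists i0.
- by case: b_nonneg => j hj; exists j; rewrite oppr_le0.
Qed.

End OmitOnePoints.

(* A relation among p, v 1, ..., v k either does not involve p (and
   Radon applies), or expresses p as a combination of the v i, which can be
   shifted to a nonnegative one avoiding some index kk, giving p \in C kk. *)
Lemma positive_relation_common_point k (C : 'I_k.+1 -> set 'rV[R]_n)
    (v : 'I_k.+1 -> 'rV[R]_n) (a : 'I_k.+1 -> R) p :
  (n < k.+1)%N -> (forall i, s_convex Phi (C i)) ->
  (forall i j, i != j -> C j (v i)) ->
  (forall i, 0 < a i) -> \sum_i a i *: v i = 0 ->
  gsphere Phi p -> (forall j, ~ C j p) -> exists x, forall j, C j x.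
Proof.
move=> hnk C_sconvex v_omit a_gt0 rel_a sph_p p_out.
pose w i := if i == ord0 then p else v i.
have [b [[i1 bi1_neq0] rel_b]] := exists_linear_relation w hnk.
pose b' i := if i == ord0 then 0 else b i.
have rel_split : b ord0 *: p + \sum_i b' i *: v i = \sum_i b i *: w i.
  by rewrite !big_ord_recl /w /b' eqxx scale0r add0r; congr (_ + _).
rewrite {}rel_b in rel_split.
have [b0|b0_neq0] := eqVneq (b ord0) 0.
  apply: (radon_common_point C_sconvex v_omit (b := b')).
  - by move: rel_split; rewrite b0 scale0r add0r.
  - exists i1; rewrite /b'; case: ifPn => [/eqP e|//].
    by move: bi1_neq0; rewrite e b0 eqxx.
  - by exists ord0; rewrite /b' eqxx.
  - by exists ord0; rewrite /b' eqxx.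
exfalso.
pose c i := - (b ord0)^-1 * b' i.
have p_comb : \sum_i c i *: v i = p.
  rewrite (eq_bigr (fun i => - (b ord0)^-1 *: (b' i *: v i))); last first.
    by move=> i _; rewrite scalerA.
  rewrite -scaler_sumr.
  have -> : \sum_i b' i *: v i = - (b ord0 *: p).
    by apply/eqP; rewrite -addr_eq0 addrC rel_split.
  by rewrite scalerN scaleNr opprK scalerA mulVf // scale1r.
have [g g_ge0 [kk [gkk0 g_comb]]] := shift_to_boundary ord0 c a_gt0 rel_a.
rewrite p_comb in g_comb.
have g_pos : exists i, 0 < g i.
  apply/not_existsP => g_npos; move: (gsphere_neq0 sph_p); rewrite -g_comb.
  rewrite big1 ?eqxx // => i _.
  have -> : g i = 0 by apply/eqP; rewrite eq_le g_ge0 andbT leNgt; apply/negP => /g_npos.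
  by rewrite scale0r.
have [_] := scone_avoiding C_sconvex v_omit g_ge0 gkk0 g_pos.
by rewrite g_comb grho_sphere //; exact: p_out.
Qed.

Lemma omit_one_common_point k (C : 'I_k.+1 -> set 'rV[R]_n) (v : 'I_k.+1 -> 'rV[R]_n) :
  (n <= k)%N -> (forall i, s_convex Phi (C i)) -> (forall i j, i != j -> C j (v i)) ->
  (forall J : {set 'I_k.+1}, #|J| = n.+1 ->
     exists x, gsphere Phi x /\ forall j, j \in J -> ~ C j x) ->
  exists x, forall j, C j x.
Proof.
move=> hnk C_sconvex v_omit no_cover.
have radon := radon_common_point C_sconvex v_omit.
have [hlt|hge] := ltnP n k.
  have [b [[l bl_neq0] rel_b]] := exists_linear_relation (fun l => v (lift ord0 l)) hlt.
  pose b' i := if unlift ord0 i is Some l then b l else 0.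
  apply: (radon b').
  - rewrite big_ord_recl /b' unlift_none scale0r add0r -[RHS]rel_b.
    by apply: eq_bigr => i _; rewrite liftK.
  - by exists (lift ord0 l); rewrite /b' liftK.
  - by exists ord0; rewrite /b' unlift_none.
  - by exists ord0; rewrite /b' unlift_none.
have ekn : k = n by apply/eqP; rewrite eqn_leq hge hnk.
have [p [sph_p p_out]] := no_cover [set: _]%SET ltac:(by rewrite cardsT card_ord ekn).
have hnk1 : (n < k.+1)%N by rewrite ekn.
have positive a : (forall i, 0 < a i) -> \sum_i a i *: v i = 0 -> exists x, forall j, C j x.
  move=> a_gt0 rel_a.
  apply: (positive_relation_common_point hnk1 C_sconvex v_omit a_gt0 rel_a sph_p).
  by move=> j; apply: p_out; rewrite inE.
have [a [[i0 ai0_neq0] rel_a]] := exists_linear_relation v hnk1.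
have [[j1 aj1_le0]|a_pos] := pselect (exists j, a j <= 0); last first.
  apply: (positive a) => // i; rewrite ltNge; apply/negP => h; apply: a_pos; by exists i.
have [[j2 aj2_ge0]|a_neg] := pselect (exists j, 0 <= a j).
  by apply: (radon a) => //; [exists i0 | exists j1 | exists j2].
apply: (positive (fun i => - a i)).
  by move=> i; rewrite oppr_gt0 ltNge; apply/negP => h; apply: a_neg; exists i.
rewrite (eq_bigr (fun i => - (a i *: v i))); last by move=> i _; rewrite scaleNr.
by rewrite sumrN rel_a oppr0.
Qed.

Lemma helly_sconvex d (C : 'I_(d + n) -> set 'rV[R]_n) :
  (forall i, s_convex Phi (C i)) ->
  (forall J : {set 'I_(d + n)}, #|J| = n -> exists x, forall j, j \in J -> C j x) ->
  (forall J : {set 'I_(d + n)}, #|J| = n.+1 ->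
     exists x, gsphere Phi x /\ forall j, j \in J -> ~ C j x) ->
  exists x, forall i, C i x.
Proof.
elim: d C => [|d IH] C C_sconvex meet cover.
  have [x hx] := meet [set: _]%SET ltac:(by rewrite cardsT card_ord).
  by exists x => i; apply: hx; rewrite inE.
have lift_card (i : 'I_(d + n).+1) (J : {set 'I_(d + n)}) :
    #|[set lift i l | l in J]%SET| = #|J|.
  by rewrite card_imset //; exact: lift_inj.
have omit_point (i : 'I_(d + n).+1) : exists y, forall l : 'I_(d + n), C (lift i l) y.
  apply: (IH (fun l => C (lift i l))) => [l|J hJ|J hJ]; first exact: C_sconvex.
  - have [x hx] := meet [set lift i l | l in J]%SET (etrans (lift_card i J) hJ).
    by exists x => l hl; apply: hx; rewrite imset_f.
  - have [x [sph_x hx]] := cover [set lift i l | l in J]%SET (etrans (lift_card i J) hJ).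
    by exists x; split => // l hl; apply: hx; rewrite imset_f.
have [v hv] := choice omit_point.
apply: (@omit_one_common_point (d + n) C v) => //; first exact: leq_addl.
by move=> i j /unlift_some [l -> _]; exact: hv.
Qed.

End SConvexCones.

Theorem mainTheorem14 (R : realType) (n : nat) (Phi : 'rV[R]_n -> R) :
  (2 <= n)%N ->
  continuous Phi ->
  (forall x, 0 <= Phi x) ->
  (forall x t, 0 <= t -> Phi (t *: x) = t * Phi x) ->
  (forall x, Phi x = 0 <-> x = 0) ->
  forall (m : nat) (C : 'I_m -> set 'rV[R]_n),
  (n <= m)%N ->
  (forall i, s_convex Phi (C i)) ->
  (forall J : {set 'I_m}, #|J| = n ->
     exists x, forall j, j \in J -> C j x) ->
  (forall J : {set 'I_m}, #|J| = n.+1 ->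
     exists x, gsphere Phi x /\ forall j, j \in J -> ~ C j x) ->
  exists x, forall i, C i x.
Proof.
move=> _ _ Phi_ge0 PhiZ Phi_eq0 m C hnm.
have := @helly_sconvex R n Phi Phi_ge0 PhiZ Phi_eq0 (m - n).
by rewrite subnK //; exact.
Qed.
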